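(* Let $\epsilon_1>0$, $n\ge1$, let $u$ be a utility function on contexts of sensitivity $\Delta u\le1$ (context population size or overlap with a fixed starting context, $-\infty$ on non-matching contexts), and let $C_V$ be a starting context with $f_M(D_{C_V},V)=\mathrm{true}$. Consider the Depth-First Search Sampling algorithm: initialize a stack containing $C_V$ and $\mathrm{Visited}=\emptyset$; while $|\mathrm{Visited}|\le n$ and the stack is nonempty: let $C$ be the top of the stack, add $C$ to $\mathrm{Visited}$, let $\mathrm{Ch}$ be the set of contexts connected to $C$ that are matching for $V$ and not in $\mathrm{Visited}$; if $\mathrm{Ch}=\emptyset$ pop the stack, otherwise push $\mathrm{Exp}^{\epsilon_1}_u(D,\mathrm{Ch})$ onto the stack. Finally output $\mathrm{Exp}^{\epsilon_1}_u(D,\mathrm{Visited})$. Then this algorithm satisfies $((2n+2)\epsilon_1,\ COE_M(\cdot,V))$-Output Constrained Differential Privacy.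
   Context: Dataset $D$ over categorical attributes $A_1,\dots,A_m$ (domain sizes $|A_i|$, all possible values) and metric attribute $M$; $t=\sum_i|A_i|$. A context is a binary vector of length $t$, $c_{ij}=1$ meaning the $j$-th value of $A_i$ is selected; $D_C$ is the set of tuples of $D$ whose value in every $A_i$ is selected by $C$. Two contexts are connected if their Hamming distance is $1$. $f_M(D_C,V)$ is a deterministic test of whether record $V$ is an outlier in $D_C$ w.r.t. $M$; a context is matching if this is true. $COE_M(D,V)$ is the set of contexts $C$ with $V\in D_C$ and $f_M(D_C,V)=\mathrm{true}$. Sensitivity $\Delta u=\max|u(D_1,r)-u(D_2,r)|$ over neighboring datasets (differing by adding/removing one record) and outputs $r$. $\mathrm{Exp}^{\epsilon}_u(D,\mathcal R)$ outputs $r\in\mathcal R$ with probability $\exp(\epsilon u(D,r)/(2\Delta u))/\sum_{r'\in\mathcal R}\exp(\epsilon u(D,r')/(2\Delta u))$. $D_1,D_2$ are $f$-neighbors if they differ by adding/removing one record and $f(D_1)=f(D_2)\ne\emptyset$; $\mathcal M$ satisfies $(\epsilon,f)$-Output Constrained Differential Privacy if $\Pr[\mathcal M(D_1)\in S]\le e^\epsilon\Pr[\mathcal M(D_2)\in S]$ for all $f$-neighbors and all output sets $S$. *)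

From mathcomp Require Import all_boot all_order all_algebra.
From mathcomp Require Import reals.
From mathcomp.analysis Require Import sequences exp.
Set Implicit Arguments. Unset Strict Implicit. Unset Printing Implicit Defensive.
Import Order.TTheory GRing.Theory Num.Theory.
Local Open Scope ring_scope.

Section DFSSampling.
Variable R : realType.
Variables (m : nat) (dom : 'I_m -> nat).

(* a record: values of A_1..A_m, and the value of the metric attribute M *)
Definition attrs := {dffun forall i : 'I_m, 'I_(dom i)}.
Definition record := (attrs * R)%type.
(* a dataset is a multiset of records, represented by a sequence up to perm_eq *)
Definition dataset := seq record.

(* positions of a context vector: pairs (i, j) = j-th value of A_i;
   there are t = sum_i |A_i| of them *)
Definition value_index := {i : 'I_m & 'I_(dom i)}.
Definition context := {ffun value_index -> bool}.

Definition selects (C : context) (x : record) : bool :=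
  [forall i : 'I_m, C (Tagged (fun i => 'I_(dom i)) (x.1 i))].

Definition restrict (D : dataset) (C : context) : dataset :=
  [seq x <- D | selects C x].

Definition connected (C1 C2 : context) : bool :=
  #|[set p | C1 p != C2 p]| == 1%N.

Definition neighbors (D1 D2 : dataset) : Prop :=
  exists x, perm_eq D2 (x :: D1) \/ perm_eq D1 (x :: D2).

Definition f_neighbors (F : dataset -> {set context}) (D1 D2 : dataset) : Prop :=
  [/\ neighbors D1 D2, F D1 = F D2 & F D1 != set0].

(* fM D' V : the deterministic outlier test f_M(D', V) *)
Variable fM : dataset -> record -> bool.

Definition COE (D : dataset) (V : record) : {set context} :=
  [set C : context | (V \in restrict D C) && fM (restrict D C) V].

Variable V : record.

(* u takes the value -oo on non-matching contexts; we record only its finite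
   part u : dataset -> context -> R, and the sensitivity is measured over the
   contexts where both values are finite. *)
Definition sens_bound (u : dataset -> context -> R) (b : R) : Prop :=
  forall D1 D2 r, neighbors D1 D2 -> r \in COE D1 V -> r \in COE D2 V ->
    `|u D1 r - u D2 r| <= b.

Definition is_sensitivity (u : dataset -> context -> R) (Delta : R) : Prop :=
  sens_bound u Delta /\ forall b, sens_bound u b -> Delta <= b.

Variables (u : dataset -> context -> R) (Delta eps : R) (n : nat) (D : dataset).

Definition expmech (S : {set context}) (r : context) : R :=
  if r \in S then
    expR (eps * u D r / (2 * Delta)) /
      \sum_(r' in S) expR (eps * u D r' / (2 * Delta))
  else 0.

(* output pmf of the remaining run of the DFS loop (k = fuel, large enough
   that it never runs out), from state (stack, Visited); top of stack = head *)
Fixpoint dfs_run (k : nat) (stack : seq context) (vis : {set context})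
  : context -> R :=
  match k with
  | 0 => expmech vis
  | k'.+1 =>
    match stack with
    | [::] => expmech vis
    | C :: _ =>
      if (n < #|vis|)%N then expmech vis else
      let vis' := C |: vis in
      let Ch := [set C' | [&& connected C C', C' \in COE D V & C' \notin vis']] in
      if Ch == set0 then dfs_run k' (behead stack) vis'
      else fun r => \sum_(C' in Ch) expmech Ch C' * dfs_run k' (C' :: stack) vis' r
    end
  end.

End DFSSampling.

Definition DFS_sampling (R : realType) (m : nat) (dom : 'I_m -> nat)
  (fM : dataset R dom -> record R dom -> bool) (V : record R dom)
  (u : dataset R dom -> context dom -> R) (Delta eps : R) (n : nat)
  (CV : context dom) (D : dataset R dom) : context dom -> R :=
  dfs_run fM V u Delta eps n D (2 * #|{: context dom}|).+2 [:: CV] set0.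

From mathcomp Require Import all_boot all_order all_algebra.
From mathcomp Require Import reals.
From mathcomp.algebra_tactics Require Import ring.
From mathcomp.analysis Require Import sequences exp.
(* The exponential mechanism is pointwise eps-private: if the score moves by at
   most Delta, every weight exp (eps u / (2 Delta)) moves by a factor at most
   e^(eps/2), so every normalized probability moves by at most e^eps.  On
   f-neighbours the matching contexts coincide, so both runs of the DFS draw
   from the same candidate sets, and the output probability is a sum over paths
   of products of exponential-mechanism probabilities.  Along a path each push
   adds a new context to the visited set (counting the top of the stack), which
   has at most n+1 elements while the loop runs; hence a path makes at most n+1
   draws before the final one, and the likelihood ratio is at most
   e^((n+2) eps) <= e^((2n+2) eps). *)

Set Implicit Arguments. Unset Strict Implicit. Unset Printing Implicit Defensive.
Import Order.TTheory GRing.Theory Num.Theory.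
Local Open Scope ring_scope.

Lemma normalized_weight_le (R : realFieldType) (I : finType) (S : {set I})
    (a b : I -> R) (k : R) (r : I) :
  r \in S -> 0 <= k -> (forall c, 0 < a c) -> (forall c, 0 < b c) ->
  {in S, forall c, a c <= k * b c /\ b c <= k * a c} ->
  a r / \sum_(c in S) a c <= k ^+ 2 * (b r / \sum_(c in S) b c).
Proof.
move=> rS k_ge0 a_gt0 b_gt0 ab_le.
have sum_gt0 (f : I -> R) : (forall c, 0 < f c) -> 0 < \sum_(c in S) f c.
  by move=> f_gt0; rewrite (bigD1 r) //= ltr_pwDl // sumr_ge0 // => c _; exact: ltW.
have sumb_le : \sum_(c in S) b c <= k * \sum_(c in S) a c.
  by rewrite mulr_sumr; apply: ler_sum => c /ab_le[].
rewrite ler_pdivrMr ?sum_gt0 //; apply: le_trans (_ : k * b r <= _).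
  by case: (ab_le r rS).
rewrite expr2 -!mulrA; apply: ler_wpM2l => //.
rewrite mulrCA -{1}[b r]mulr1; apply: ler_wpM2l; first exact: ltW.
by rewrite mulrCA mulrC ler_pdivlMr ?sum_gt0 // mul1r.
Qed.

Lemma ler_expR_natM (R : realType) (eps x : R) (N1 N2 : nat) :
  0 <= eps -> 0 <= x -> (N1 <= N2)%N ->
  expR (N1%:R * eps) * x <= expR (N2%:R * eps) * x.
Proof.
by move=> eps_ge0 x_ge0 N12; rewrite ler_wpM2r // ler_expR ler_wpM2r // ler_nat.
Qed.

Section ExponentialMechanism.
Variables (R : realType) (m : nat) (dom : 'I_m -> nat).
Variables (u : dataset R dom -> context dom -> R) (Delta eps : R).
Implicit Types (D : dataset R dom) (S : {set context dom}) (r : context dom).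

Lemma expmech_ge0 D S r : 0 <= expmech u Delta eps D S r.
Proof.
rewrite /expmech; case: (r \in S) => //.
by rewrite divr_ge0 ?sumr_ge0 // => *; exact: ltW (expR_gt0 _).
Qed.

Hypotheses (eps_ge0 : 0 <= eps) (Delta_gt0 : 0 < Delta).

Lemma expR_scaled_le (x y : R) : `|x - y| <= Delta ->
  expR (eps * x / (2 * Delta)) <= expR (eps / 2) * expR (eps * y / (2 * Delta)).
Proof.
move=> xy; rewrite -expRD ler_expR -subr_le0.
have -> : eps * x / (2 * Delta) - (eps / 2 + eps * y / (2 * Delta))
        = eps / (2 * Delta) * ((x - y) - Delta) by field; rewrite gt_eqF.
apply: mulr_ge0_le0; first by rewrite divr_ge0 // ltW // mulr_gt0.
by rewrite subr_le0; move: xy; rewrite ler_norml => /andP[].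
Qed.

Lemma expmech_le D1 D2 S r : {in S, forall c, `|u D1 c - u D2 c| <= Delta} ->
  expmech u Delta eps D1 S r <= expR eps * expmech u Delta eps D2 S r.
Proof.
move=> u12; rewrite /expmech; case: ifP => rS; last by rewrite mulr0.
have -> : expR eps = expR (eps / 2) ^+ 2 by rewrite expr2 -expRD -splitr.
apply: normalized_weight_le; rewrite ?expR_ge0 //; [move=> c; exact: expR_gt0.. |].
by move=> c /u12 u12c; split; apply: expR_scaled_le; rewrite // distrC.
Qed.

End ExponentialMechanism.

Section DepthFirstSampling.
Variables (R : realType) (m : nat) (dom : 'I_m -> nat).
Variables (fM : dataset R dom -> record R dom -> bool) (V : record R dom).
Variables (u : dataset R dom -> context dom -> R) (Delta eps : R) (n : nat).
Implicit Types (D : dataset R dom) (st : seq (context dom)) (vis : {set context dom}).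

Local Notation dfs_run := (dfs_run fM V u Delta eps n).
Local Notation expmech := (expmech u Delta eps).

Lemma dfs_run_ge0 D k st vis r : 0 <= dfs_run D k st vis r.
Proof.
elim: k st vis => [|k IH] [|C s] vis /=; rewrite ?expmech_ge0 //.
case: ifP => _; first exact: expmech_ge0.
case: ifP => _; first exact: IH.
by apply: sumr_ge0 => C' _; rewrite mulr_ge0 ?expmech_ge0.
Qed.

Definition next_visited st vis : {set context dom} :=
  if st is C :: _ then C |: vis else vis.

Lemma sub_next_visited st vis : vis \subset next_visited st vis.
Proof. by case: st => [|C s] //=; exact: subsetUr. Qed.

Hypotheses (eps_ge0 : 0 <= eps) (Delta_gt0 : 0 < Delta).
Variables (D1 D2 : dataset R dom).
Hypothesis COE12 : COE fM D1 V = COE fM D2 V.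
Hypothesis u12 : {in COE fM D1 V, forall c, `|u D1 c - u D2 c| <= Delta}.

(* N is the number of pushes still affordable: a push makes one draw and
   grows next_visited by one, a pop cannot shrink it. *)
Lemma dfs_run_le k st vis N r :
  all (mem (COE fM D1 V)) st -> vis \subset COE fM D1 V ->
  (n + 2 <= #|next_visited st vis| + N)%N ->
  dfs_run D1 k st vis r <= expR (N.+1%:R * eps) * dfs_run D2 k st vis r.
Proof.
have final vis' N' : vis' \subset COE fM D1 V ->
    expmech D1 vis' r <= expR (N'.+1%:R * eps) * expmech D2 vis' r.
  move=> /subsetP vis'_COE; apply: le_trans; first apply: expmech_le => //.
    by move=> c /vis'_COE; exact: u12.
  rewrite -{1}[eps]mul1r; apply: (@ler_expR_natM _ _ _ 1) => //.
  exact: expmech_ge0.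
elim: k st vis N => [|k IH] [|C s] vis N st_COE vis_COE /= budget; try exact: final.
case: ifP => [_|/negbT]; first exact: final.
rewrite -leqNgt => small.
move: st_COE => /= /andP[C_COE s_COE].
have vis'_COE : C |: vis \subset COE fM D1 V by rewrite subUset sub1set C_COE.
have vis'_small : (#|C |: vis| <= n.+1)%N by rewrite cardsU1 -add1n leq_add ?leq_b1.
rewrite -COE12; case: ifP => [_|_].
  apply: IH => //; apply: leq_trans budget _; rewrite leq_add2r.
  exact/subset_leq_card/sub_next_visited.
case: N budget => [|N'] budget.
  by rewrite addn0 in budget; have := leq_trans budget vis'_small; rewrite addn2 ltnn.
have split_exp : expR (N'.+2%:R * eps) = expR eps * expR (N'.+1%:R * eps).
  by rewrite -expRD; congr expR; ring.
rewrite mulr_sumr; apply: ler_sum => C'; rewrite inE => /and3P[_ C'_COE C'_new].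
rewrite split_exp [in X in _ <= X]mulrACA; apply: ler_pM.
- exact: expmech_ge0.
- exact: dfs_run_ge0.
- apply: expmech_le => // c.
  by rewrite inE => /and3P[_ c_COE _]; exact: u12.
- apply: IH => /=; rewrite ?C'_COE ?C_COE //.
  by rewrite cardsU1 C'_new /= add1n addSnnS.
Qed.

End DepthFirstSampling.

Theorem theorem8 (R : realType) (m : nat) (dom : 'I_m -> nat)
  (fM : dataset R dom -> record R dom -> bool)
  (u : dataset R dom -> context dom -> R) (Delta eps1 : R) (n : nat)
  (V : record R dom) (CV : context dom) :
  0 < eps1 -> (1 <= n)%N ->
  is_sensitivity fM V u Delta -> 0 < Delta -> Delta <= 1 ->
  forall D1 D2 : dataset R dom,
    f_neighbors (fun D => COE fM D V) D1 D2 ->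
    CV \in COE fM D1 V ->
    forall S : {set context dom},
      \sum_(r in S) DFS_sampling fM V u Delta eps1 n CV D1 r
      <= expR ((2 * n + 2)%:R * eps1)
         * \sum_(r in S) DFS_sampling fM V u Delta eps1 n CV D2 r.
Proof.
move=> eps1_gt0 _ [sens _] Delta_gt0 _ D1 D2 [neighbors12 COE12 _] CV_COE S.
have u12 : {in COE fM D1 V, forall c, `|u D1 c - u D2 c| <= Delta}.
  by move=> c c_COE; apply: sens => //; rewrite -COE12.
rewrite mulr_sumr; apply: ler_sum => r _; rewrite /DFS_sampling.
apply: le_trans; first apply: (dfs_run_le (ltW eps1_gt0) Delta_gt0 COE12 u12 _ (N := n.+1)).
- by rewrite /= CV_COE.
- exact: sub0set.
- by rewrite /= setU0 cards1 add1n addn2.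
apply: ler_expR_natM; [exact: ltW | exact: dfs_run_ge0 | by rewrite addn2 !ltnS mul2n -addnn leq_addr].
Qed.
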